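(* For any $F\in\mathscr{F}_{\mathrm{AIFV}}$: (i) $\mathcal{P}^1_{F,0}=\mathcal{P}^1_{F,1}=\{0,1\}$; (ii) for any $i\in\{0,1\}$ and $b\in\mathcal{C}$, if $\mathcal{S}_{F,i}(\lambda)=\emptyset$ and $(i,b)\ne(1,0)$, then $\mathcal{P}^1_{F,i}(b)=\{0,1\}$; (iii) for any $i\in\{0,1\}$ and $s\in\mathcal{S}$, if $\bar{\mathcal{P}}^0_{F,i}(f_i(s))\ne\emptyset$, then $\bar{\mathcal{P}}^2_{F,i}(f_i(s))=\{00\}$.
   Context: $\mathcal{S}$ is a finite source alphabet with $|\mathcal{S}|\ge 2$ and $\mathcal{C}=\{0,1\}$; $\mathcal{A}^k,\mathcal{A}^{\ast},\mathcal{A}^{+}$ are sequences of length $k$, finite, positive finite length; $\lambda$ empty sequence; $\preceq$ prefix, $\prec$ proper prefix; $\mathrm{suff}(x_1\cdots x_n)=x_2\cdots x_n$. A code-tuple $F$ with $m\ge1$ code tables consists of maps $f_i:\mathcal{S}\to\mathcal{C}^{\ast}$ and $\tau_i:\mathcal{S}\to\{0,\dots,m-1\}$, $i\in\{0,\dots,m-1\}$; $|F|=m$. $f_i^{\ast}(\lambda)=\lambda$, $f_i^{\ast}(\pmb{x})=f_i(x_1)f^{\ast}_{\tau_i(x_1)}(\mathrm{suff}(\pmb{x}))$. $\mathcal{S}_{F,i}(\pmb{b})=\{s:f_i(s)=\pmb{b}\}$. For integer $k\ge0$, $\pmb{b}\in\mathcal{C}^{\ast}$: $\mathcal{P}^k_{F,i}(\pmb{b})$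 is the set of $\pmb{c}\in\mathcal{C}^k$ such that some $\pmb{x}=x_1\cdots x_n\in\mathcal{S}^{+}$ has $f_i^{\ast}(\pmb{x})\succeq\pmb{b}\pmb{c}$ and $f_i(x_1)\succeq\pmb{b}$; $\bar{\mathcal{P}}^k_{F,i}(\pmb{b})$ the same with $f_i(x_1)\succ\pmb{b}$; $\mathcal{P}^k_{F,i}=\mathcal{P}^k_{F,i}(\lambda)$, $\bar{\mathcal{P}}^k_{F,i}=\bar{\mathcal{P}}^k_{F,i}(\lambda)$. $\mathscr{F}_{\mathrm{AIFV}}$ is the set of code-tuples $F$ with $|F|=2$ satisfying: (i) $f_0,f_1$ injective; (ii) for all $i\in\{0,1\}$, $s$: $1\notin\bar{\mathcal{P}}^1_{F,i}(f_i(s))$ and $1\notin\bar{\mathcal{P}}^1_{F,i}(f_i(s)0)$; (iii) $f_i(s')\ne f_i(s)0$ for all $i,s,s'$; (iv) $\tau_i(s)=0$ if $\bar{\mathcal{P}}^0_{F,i}(f_i(s))=\emptyset$, and $\tau_i(s)=1$ otherwise; (v) $f_1(s)\ne\lambda$ and $f_1(s)\ne0$ for all $s$; (vi) $0\notin\bar{\mathcal{P}}^1_{F,1}(0)$; (vii) for all $i\in\{0,1\}$, $\pmb{b}\in\mathcal{C}^{\ast}$ with $|\bar{\mathcal{P}}^1_{F,i}(\pmb{b})|=1$: either $f_i(s)\pmb{c}=\pmb{b}$ for some $s\in\mathcal{S}$, $\pmb{c}\in\mathcal{C}^0\cup\mathcal{C}^1$, or $(i,\pmb{b})=(1,0)$.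 *)

From mathcomp Require Import all_boot.
Set Implicit Arguments. Unset Strict Implicit. Unset Printing Implicit Defensive.

(* Code alphabet C = {0,1} is encoded as bool: 0 = false, 1 = true.
   Sequences over C are seq bool; lambda = [::]. *)

Record codeTuple (S : Type) (m : nat) := CodeTuple {
  ct_f   : 'I_m -> S -> seq bool;
  ct_tau : 'I_m -> S -> 'I_m }.

Definition i0 : 'I_2 := @Ordinal 2 0 erefl.
Definition i1 : 'I_2 := @Ordinal 2 1 erefl.

Fixpoint fstar (S : Type) (m : nat) (F : codeTuple S m) (i : 'I_m) (x : seq S)
  : seq bool :=
  match x with
  | [::] => [::]
  | x1 :: xs => ct_f F i x1 ++ fstar F (ct_tau F i x1) xs
  end.

Definition pprefix (s t : seq bool) : bool := prefix s t && (s != t).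

Definition Pk (S : Type) (m : nat) (F : codeTuple S m) (k : nat) (i : 'I_m)
  (b c : seq bool) : Prop :=
  size c = k /\
  exists (x1 : S) (xs : seq S),
    prefix (b ++ c) (fstar F i (x1 :: xs)) /\ prefix b (ct_f F i x1).

Definition Pbark (S : Type) (m : nat) (F : codeTuple S m) (k : nat) (i : 'I_m)
  (b c : seq bool) : Prop :=
  size c = k /\
  exists (x1 : S) (xs : seq S),
    prefix (b ++ c) (fstar F i (x1 :: xs)) /\ pprefix b (ct_f F i x1).

(* membership in the class F_AIFV (|F| = 2 is enforced by the type) *)
Definition AIFV (S : Type) (F : codeTuple S 2) : Prop :=
  (* (i) *)
  (forall i : 'I_2, injective (ct_f F i)) /\
  (* (ii) *)
  (forall (i : 'I_2) (s : S),
      ~ Pbark F 1 i (ct_f F i s) [:: true] /\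
      ~ Pbark F 1 i (ct_f F i s ++ [:: false]) [:: true]) /\
  (* (iii) *)
  (forall (i : 'I_2) (s s' : S), ct_f F i s' <> ct_f F i s ++ [:: false]) /\
  (* (iv) *)
  (forall (i : 'I_2) (s : S),
      ((forall c, ~ Pbark F 0 i (ct_f F i s) c) -> ct_tau F i s = i0) /\
      (~ (forall c, ~ Pbark F 0 i (ct_f F i s) c) -> ct_tau F i s = i1)) /\
  (* (v) *)
  (forall s : S, ct_f F i1 s <> [::] /\ ct_f F i1 s <> [:: false]) /\
  (* (vi) *)
  ~ Pbark F 1 i1 [:: false] [:: false] /\
  (* (vii) *)
  (forall (i : 'I_2) (b : seq bool),
      (exists c0, forall c, Pbark F 1 i b c <-> c = c0) ->
      (exists (s : S) (c : seq bool), size c <= 1 /\ ct_f F i s ++ c = b)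
      \/ (i = i1 /\ b = [:: false])).

From Stdlib Require Import Classical.
From mathcomp Require Import all_boot.
Set Implicit Arguments. Unset Strict Implicit.

(* By (ii) and (iii), whatever extends a codeword f_i(s) inside the first
   codeword starts with 00, which is (iii).  For (i) and (ii), each bit that
   can follow b inside a first codeword f_i(x_1) lies in bar P^1_i(b); if only
   one bit can, (vii) says that b is a codeword up to one trailing bit.  A
   codeword f_i(s) has P^1_i(f_i(s)) = P^1_{tau_i(s)}(lambda), so it suffices
   to know P^1_j(lambda) = {0,1}; the degenerate codeword lambda is excluded
   by (v) in table 1 and, in table 0, forces tau_0(s) = 1 by (iv) because
   injectivity and |S| >= 2 give a nonempty codeword f_0(s_0). *)

Lemma prefix_cat2l (T : eqType) (b s t : seq T) :
  prefix (b ++ s) (b ++ t) = prefix s t.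
Proof. by rewrite prefix_catr // eqxx. Qed.

Lemma ord2_cases (j : 'I_2) : j = i0 \/ j = i1.
Proof. by case: j => [[|[|//]] ?]; [left | right]; apply: val_inj. Qed.

Lemma exists_neq_of_injective (T : finType) (U : eqType) (f : T -> U) (a : U) :
  1 < #|T| -> injective f -> exists t, f t <> a.
Proof.
move=> /card_gt1P [t [t' [_ _ neq_tt']]] inj_f.
case: (eqVneq (f t) a) => [fta | /eqP]; last by exists t.
by exists t' => ft'a; move/eqP: neq_tt'; apply; apply: inj_f; rewrite fta ft'a.
Qed.

Section CodeTuple.
Variables (S : Type) (m : nat) (F : codeTuple S m).

Definition Pk1_full (i : 'I_m) (b : seq bool) : Prop :=
  forall c, Pk F 1 i b c <-> (c = [:: false] \/ c = [:: true]).

Lemma Pk1_fullP i b :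
  Pk F 1 i b [:: false] -> Pk F 1 i b [:: true] -> Pk1_full i b.
Proof.
move=> P0 P1 c; split; last by case=> ->.
by case: c => [|[] [|? ?]] [] //; [right | left].
Qed.

Lemma Pbark_Pk k i b c : Pbark F k i b c -> Pk F k i b c.
Proof.
case=> size_c [x1 [xs [pre /andP[pre_b _]]]].
by split => //; exists x1, xs.
Qed.

Lemma Pbark1_full i b x :
  Pbark F 1 i b [:: x] -> Pbark F 1 i b [:: ~~ x] -> Pk1_full i b.
Proof. by case: x => Px Pnx; apply: Pk1_fullP; apply: Pbark_Pk. Qed.

Lemma Pbark1_single i b x :
  Pbark F 1 i b [:: x] -> ~ Pbark F 1 i b [:: ~~ x] ->
  exists c0, forall c, Pbark F 1 i b c <-> c = c0.
Proof.
move=> Px Pnx; exists [:: x] => c; split; last by move=> ->.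
case: c => [|y [|? ?]] Py; [by case: Py | | by case: Py].
case: (eqVneq y x) => [-> // | y_neq]; case: Pnx.
suff -> : ~~ x = y by [].
by case: x y y_neq {Px Py} => [] [].
Qed.

Lemma Pbark_codeword i s b c r :
  ct_f F i s = b ++ c ++ r -> c ++ r != [::] -> Pbark F (size c) i b c.
Proof.
move=> fs nz; split => //; exists s, [::]; split.
  by rewrite /= cats0 fs catA prefix_prefix.
rewrite /pprefix fs prefix_prefix -{1}(cats0 b) eqseq_cat // eqxx.
by rewrite eq_sym.
Qed.

Lemma Pk1_full_codeword i s :
  Pk1_full (ct_tau F i s) [::] -> Pk1_full i (ct_f F i s).
Proof.
move=> full_tau.
have ext c : c = [:: false] \/ c = [:: true] -> Pk F 1 i (ct_f F i s) c.
  move=> /full_tau [size_c [x1 [xs [pre _]]]].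
  split => //; exists s, (x1 :: xs).
  by rewrite [fstar _ _ _]/= prefix_cat2l prefix_refl.
by apply: Pk1_fullP; apply: ext; [left | right].
Qed.

Hypothesis no_1_after_codeword : forall i s,
  ~ Pbark F 1 i (ct_f F i s) [:: true] /\
  ~ Pbark F 1 i (ct_f F i s ++ [:: false]) [:: true].
Hypothesis no_codeword_0 : forall i s s',
  ct_f F i s' <> ct_f F i s ++ [:: false].

Lemma codeword_ext_00 i s s' : pprefix (ct_f F i s) (ct_f F i s') ->
  exists r, ct_f F i s' = ct_f F i s ++ [:: false, false & r].
Proof.
case/andP=> /prefixP [u fs'] neq.
have [no_1 no_01] := no_1_after_codeword i s.
case: u fs' neq => [|[] u] fs'.
- by rewrite fs' cats0 eqxx.
- by case: no_1; apply: (Pbark_codeword (c := [:: true]) fs').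
case: u fs' => [|[] u] fs' _.
- by case: (no_codeword_0 fs').
- case: no_01; apply: (Pbark_codeword (s := s') (c := [:: true])) => //.
  by rewrite fs' -catA.
- by exists u.
Qed.

Lemma Pbark2_codeword i s : (exists c, Pbark F 0 i (ct_f F i s) c) ->
  forall c, Pbark F 2 i (ct_f F i s) c <-> c = [:: false; false].
Proof.
move=> [_ [_ [s0 [_ [_ ext0]]]]] c; split.
  case=> size_c [x1 [xs [pre ext]]]; have [r fx1] := codeword_ext_00 ext.
  move: pre; rewrite /= fx1 -catA prefix_cat2l.
  by case: c size_c => [|? [|? [|]]] //= _ /andP[/eqP -> /andP[/eqP -> _]].
move=> ->; have [r fs0] := codeword_ext_00 ext0.
by apply: (Pbark_codeword (c := [:: false; false]) fs0).
Qed.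

End CodeTuple.

Section TwoTables.
Variables (S : Type) (F : codeTuple S 2).

Hypothesis tau_def : forall (i : 'I_2) (s : S),
  ((forall c, ~ Pbark F 0 i (ct_f F i s) c) -> ct_tau F i s = i0) /\
  (~ (forall c, ~ Pbark F 0 i (ct_f F i s) c) -> ct_tau F i s = i1).
Hypothesis f1_nonnil : forall s, ct_f F i1 s <> [::].
Hypothesis single_Pbark1 : forall (i : 'I_2) (b : seq bool),
  (exists c0, forall c, Pbark F 1 i b c <-> c = c0) ->
  (exists (s : S) (c : seq bool), size c <= 1 /\ ct_f F i s ++ c = b)
  \/ (i = i1 /\ b = [:: false]).

Lemma Pk1_full_of_Pbark1 i b x :
  (forall s c, size c <= 1 -> ct_f F i s ++ c = b -> Pk1_full F i b) ->
  (i, b) <> (i1, [:: false]) ->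
  Pbark F 1 i b [:: x] -> Pk1_full F i b.
Proof.
move=> codeword_full not_exc Px.
case: (classic (Pbark F 1 i b [:: ~~ x])) => [Pnx | Pnx].
  exact: Pbark1_full Px Pnx.
case: (single_Pbark1 (Pbark1_single Px Pnx)) => [[s [c [size_c fsc]]] | []].
  exact: codeword_full fsc.
by move=> ei eb; case: not_exc; rewrite ei eb.
Qed.

Lemma Pk1_full_nil_i1 (s0 : S) : Pk1_full F i1 [::].
Proof.
case E: (ct_f F i1 s0) (@f1_nonnil s0) => [|x r] // _.
apply: (@Pk1_full_of_Pbark1 _ _ x) => //; last first.
  by apply: (Pbark_codeword (b := [::]) (c := [:: x]) E).
move=> s c _ fsc; case: (@f1_nonnil s).
by case: (ct_f F i1 s) fsc.
Qed.

Lemma Pk1_full_nil_i0 (s0 : S) : ct_f F i0 s0 <> [::] -> Pk1_full F i0 [::].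
Proof.
case E: (ct_f F i0 s0) => [|x r] // _.
apply: (@Pk1_full_of_Pbark1 _ _ x) => //; last first.
  by apply: (Pbark_codeword (b := [::]) (c := [:: x]) E).
move=> s c _ fsc; have fs : ct_f F i0 s = [::] by case: (ct_f F i0 s) fsc.
have tau_s : ct_tau F i0 s = i1.
  apply: (proj2 (tau_def i0 s)) => no_ext; apply: (no_ext [::]); rewrite fs.
  by apply: (Pbark_codeword (b := [::]) (c := [::]) E).
by rewrite -fs; apply: Pk1_full_codeword; rewrite tau_s; apply: Pk1_full_nil_i1.
Qed.

Lemma Pk1_full_nil (s0 : S) : ct_f F i0 s0 <> [::] ->
  forall j, Pk1_full F j [::].
Proof.
move=> f0s0 j; case: (ord2_cases j) => ->.
  exact: Pk1_full_nil_i0 f0s0.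
exact: Pk1_full_nil_i1 s0.
Qed.

Lemma Pk1_full_letter (s0 : S) : ct_f F i0 s0 <> [::] ->
  forall i b, (forall s, ct_f F i s <> [::]) -> (i, b) <> (i1, false) ->
  Pk1_full F i [:: b].
Proof.
move=> f0s0 i b nonnil not_exc; have Pnil := Pk1_full_nil f0s0.
have codeword_full s : ct_f F i s = [:: b] -> Pk1_full F i [:: b].
  by move<-; apply: Pk1_full_codeword; apply: Pnil.
have [_ [s [xs [pre _]]]] : Pk F 1 i [::] [:: b].
  by apply/Pnil; case: b {not_exc codeword_full}; [right | left].
move: pre (nonnil s); rewrite /=.
case E: (ct_f F i s) => [|y r] //= /andP[/eqP eq_by _] _; subst y.
case: r E => [|z r] E; first exact: codeword_full E.
apply: (@Pk1_full_of_Pbark1 _ _ z); last first.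
- by apply: (Pbark_codeword (b := [:: b]) (c := [:: z]) E).
- by case=> ib by_; case: not_exc; rewrite ib by_.
move=> s' [|w [|//]] _; first by rewrite cats0; apply: codeword_full.
by case: (ct_f F i s') (nonnil s') => [|? []].
Qed.

End TwoTables.

Theorem lemma30 (S : finType) (HS : 1 < #|S|) (F : codeTuple S 2) :
  AIFV F ->
  (* (i) *)
  (forall c, Pk F 1 i0 [::] c <-> (c = [:: false] \/ c = [:: true])) /\
  (forall c, Pk F 1 i1 [::] c <-> (c = [:: false] \/ c = [:: true])) /\
  (* (ii) *)
  (forall (i : 'I_2) (b : bool),
      (forall s : S, ct_f F i s <> [::]) ->
      (i, b) <> (i1, false) ->
      forall c, Pk F 1 i [:: b] c <-> (c = [:: false] \/ c = [:: true])) /\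
  (* (iii) *)
  (forall (i : 'I_2) (s : S),
      (exists c, Pbark F 0 i (ct_f F i s) c) ->
      forall c, Pbark F 2 i (ct_f F i s) c <-> c = [:: false; false]).
Proof.
move=> [inj_f [no_1 [no_0 [tau_def [f1_long [_ single]]]]]].
have f1_nonnil s : ct_f F i1 s <> [::] by case: (f1_long s).
have [s0 f0s0] := exists_neq_of_injective [::] HS (inj_f i0).
have Pnil := Pk1_full_nil tau_def f1_nonnil single f0s0.
split; first exact: Pnil.
split; first exact: Pnil.
split=> [i b | i s].
  exact: (Pk1_full_letter tau_def f1_nonnil single f0s0).
exact: (Pbark2_codeword no_1 no_0).
Qed.
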